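(* Let $p_1=(\alpha,r,\delta)$ be a condition, $y\in\ell^2$ be nicely hypercyclic, and $U_{q,\varepsilon}$ be a basic neighborhood ($q\in\mathbb Q^{<\omega}$, $\varepsilon$ a positive rational). Then there is a condition $p_2=(\beta,s,\eta)$ such that $p_2<p_1$ and, for some $k\le|\beta|$, $B^k_{\beta^+}$ maps $y$ nicely into $U_{q,\varepsilon}$.
   Context: $\omega=\{0,1,2,\dots\}$; $\ell^2$ is the Hilbert space of square-summable real sequences indexed by $\omega$. For nonempty $q\in\mathbb Q^{<\omega}$ and rational $\varepsilon>0$, $U_{q,\varepsilon}=\{x\in\ell^2:\lVert (x\upharpoonright|q|)-q\rVert_\infty<\varepsilon|q|^{-1/2}\text{ and }\lVert x\upharpoonright[|q|,\infty)\rVert_2<\varepsilon\}$; for $q$ empty, $U_{q,\varepsilon}=\{x:\lVert x\rVert_2<\varepsilon\}$. For $w\in\{1,2\}^\omega$, $B_w(x)(i)=w(i)x(i+1)$. A function $w$ on $\omega$ is $n$-nice at $k$ if $w(i)=w(k+i)$ for all $i<n$. $B_w^k$ maps $y$ nicely into $U_{q,\varepsilon}$ if $B_w^k(y)\in U_{q,\varepsilon}$, $w$ is $|q|$-nice at $k$, and $\lVert y\upharpoonright[k+|q|,\infty)\rVert_2<\varepsilon 2^{-k}$. $y$ is nicely hypercyclic if there is $w\in\{1,2\}^\omega$ such that for every $U_{q,\varepsilon}$ some $B_w^k$ maps $y$ nicely into $U_{q,\varepsilon}$. For $\alpha\in\{1,2\}^{<\omega}$, $\alpha^+$ is $\alpha$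 followed by all $2$'s. A condition is a triple $(\alpha,r,\delta)\in\{1,2\}^{<\omega}\times\mathbb Q^{<\omega}\times(\mathbb Q\cap(0,1))$ with $|\alpha|\ge|r|$ and $\delta<2^{-|\alpha|}$. For conditions, $(\alpha_2,r_2,\delta_2)<(\alpha_1,r_1,\delta_1)$ means: $\alpha_1$ is an initial segment of $\alpha_2$; $\overline{U_{r_2,\delta_2}}\subseteq U_{r_1,\delta_1}$; and for all $k\in[|\alpha_1|,|\alpha_2|)$, $B^k_{\alpha_2^+}[U_{r_2,\delta_2}]\subseteq\{z\in\ell^2:\lVert z\rVert_2<1\}$. *)

From Stdlib Require Import Reals Lra List QArith Qreals.
From Coquelicot Require Import Coquelicot.
Open Scope R_scope.

Definition seqR := nat -> R.

Definition in_l2 (x : seqR) : Prop := ex_series (fun i => (x i) ^ 2).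

Definition l2norm (x : seqR) : R := sqrt (Series (fun i => (x i) ^ 2)).

Definition tail2 (n : nat) (x : seqR) : R :=
  sqrt (Series (fun i => (x (n + i)%nat) ^ 2)).

Definition head_inf_lt (q : list Q) (x : seqR) (c : R) : Prop :=
  forall i, (i < length q)%nat -> Rabs (x i - Q2R (nth i q 0%Q)) < c.

Definition Ubasic (q : list Q) (eps : Q) (x : seqR) : Prop :=
  in_l2 x /\
  match q with
  | nil => l2norm x < Q2R eps
  | _ :: _ =>
      head_inf_lt q x (Q2R eps / sqrt (INR (length q))) /\
      tail2 (length q) x < Q2R eps
  end.

Definition l2closure (A : seqR -> Prop) (x : seqR) : Prop :=
  in_l2 x /\
  forall e, 0 < e -> exists z, A z /\ l2norm (fun i => x i - z i) < e.

Definition weight12 (w : nat -> nat) : Prop := forall i, w i = 1%nat \/ w i = 2%nat.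

Definition Bw (w : nat -> nat) (x : seqR) : seqR := fun i => INR (w i) * x (S i).
Definition Bwk (w : nat -> nat) (k : nat) (x : seqR) : seqR := Nat.iter k (Bw w) x.

Definition nice (w : nat -> nat) (n k : nat) : Prop :=
  forall i, (i < n)%nat -> w i = w (k + i)%nat.

Definition maps_nicely (w : nat -> nat) (k : nat) (y : seqR) (q : list Q) (eps : Q) : Prop :=
  Ubasic q eps (Bwk w k y) /\ nice w (length q) k /\
  tail2 (k + length q) y < Q2R eps * / 2 ^ k.

Definition nicely_hypercyclic (y : seqR) : Prop :=
  in_l2 y /\
  exists w, weight12 w /\
    forall (q : list Q) (eps : Q), (0 < eps)%Q ->
      exists k, maps_nicely w k y q eps.

Definition alpha_plus (alpha : list nat) : nat -> nat := fun i => nth i alpha 2%nat.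

Definition is_condition (alpha : list nat) (r : list Q) (delta : Q) : Prop :=
  List.Forall (fun a => a = 1%nat \/ a = 2%nat) alpha /\
  (length r <= length alpha)%nat /\
  (0 < delta)%Q /\ (delta < 1)%Q /\
  Q2R delta < / 2 ^ (length alpha).

Definition cond_lt (alpha2 : list nat) (r2 : list Q) (delta2 : Q)
                   (alpha1 : list nat) (r1 : list Q) (delta1 : Q) : Prop :=
  (exists t, alpha2 = alpha1 ++ t) /\
  (forall x, l2closure (Ubasic r2 delta2) x -> Ubasic r1 delta1 x) /\
  (forall k, (length alpha1 <= k < length alpha2)%nat ->
     forall z, Ubasic r2 delta2 z -> in_l2 (Bwk (alpha_plus alpha2) k z) /\
                                l2norm (Bwk (alpha_plus alpha2) k z) < 1).

(* Let [w] witness that [y] is nicely hypercyclic, [L = |alpha|] and [n = |q|].  For a hitting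
   time [k] of [w], let [beta] be [alpha], then [w] on [[L, k]], then the first [n] letters of this
   word once more, so that [beta^+] is [n]-nice at [k + 1].  On the first [n] coordinates,
   [B_{beta^+}^{k+1} y] is then [c] times [B_w^k y] shifted by one, where
   [c = (prod_{j<L} alpha^+(j)) w(0) / prod_{j<L} w(j)] does not depend on [k].  So it suffices to
   aim [B_w^k y] at a basic set centred at [(N, q / c)] with a huge [N], which forces
   [k >= L + n].  Any extension [beta] of [alpha] over [{1,2}] then yields the condition
   [(beta, r, delta / 2^(|beta| + 2))] below [(alpha, r, delta)], since [B^j] multiplies norms by
   at most [2^j]. *)

From Stdlib Require Import Reals Lra Lia List QArith Qreals ZArith.
From Coquelicot Require Import Coquelicot.
Open Scope R_scope.

Lemma ex_series_scal_R (c : R) (a : nat -> R) :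
  ex_series a -> ex_series (fun n => c * a n).
Proof. exact (@ex_series_scal_l R_AbsRing R_NormedModule c a). Qed.

Lemma ex_series_plus_R (a b : nat -> R) :
  ex_series a -> ex_series b -> ex_series (fun n => a n + b n).
Proof. exact (@ex_series_plus R_AbsRing R_NormedModule a b). Qed.

Lemma ex_series_le_R (a b : nat -> R) :
  (forall n, 0 <= a n <= b n) -> ex_series b -> ex_series a.
Proof.
  intros Hab. apply (@ex_series_le R_AbsRing R_CompleteNormedModule).
  intros n. change (Rabs (a n) <= b n). rewrite Rabs_pos_eq; apply Hab.
Qed.

Lemma Series_nonneg (a : nat -> R) :
  (forall n, 0 <= a n) -> ex_series a -> 0 <= Series a.
Proof.
  intros Ha Hex.
  replace 0 with (Series (fun n => 0 * a n)) by (rewrite Series_scal_l; ring).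
  apply Series_le; [|exact Hex]. intros n. rewrite Rmult_0_l. split; [lra | apply Ha].
Qed.

Lemma sqrt_lt_iff (a b : R) : 0 <= a -> 0 <= b -> sqrt a < b <-> a < b ^ 2.
Proof.
  intros Ha Hb. rewrite <- (sqrt_pow2 b Hb) at 1.
  split; [apply sqrt_lt_0_alt | intros; apply sqrt_lt_1_alt; lra].
Qed.

Definition tail_sq (m : nat) (x : seqR) : R := Series (fun i => x (m + i)%nat ^ 2).

Section Tails.

Variable x : seqR.
Hypothesis Hx : in_l2 x.

Lemma ex_series_tail_sq m : ex_series (fun i => x (m + i)%nat ^ 2).
Proof.
  induction m as [|m IH]; [exact Hx|].
  apply ex_series_incr_1 in IH.
  eapply ex_series_ext; [|exact IH]. intros i. simpl. now rewrite Nat.add_succ_r.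
Qed.

Lemma tail_sq_nonneg m : 0 <= tail_sq m x.
Proof. apply Series_nonneg; [intros; apply pow2_ge_0 | apply ex_series_tail_sq]. Qed.

Lemma tail_sq_S m : tail_sq m x = x m ^ 2 + tail_sq (S m) x.
Proof.
  unfold tail_sq. rewrite Series_incr_1 by apply ex_series_tail_sq.
  rewrite Nat.add_0_r. f_equal. apply Series_ext. intros i. now rewrite Nat.add_succ_r.
Qed.

Lemma tail_sq_antimon m m' : (m <= m')%nat -> tail_sq m' x <= tail_sq m x.
Proof.
  induction 1 as [|m' _ IH]; [lra|].
  rewrite tail_sq_S in IH. pose proof (pow2_ge_0 (x m')). lra.
Qed.

Lemma tail2_antimon m m' : (m <= m')%nat -> tail2 m' x <= tail2 m x.
Proof. intros Hm. apply sqrt_le_1_alt, tail_sq_antimon, Hm. Qed.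

Lemma Rabs_le_tail2 m j : (m <= j)%nat -> Rabs (x j) <= tail2 m x.
Proof.
  intros Hj. rewrite <- (sqrt_pow2 _ (Rabs_pos (x j))), pow2_abs.
  apply sqrt_le_1_alt. fold (tail_sq m x).
  pose proof (tail_sq_antimon m j Hj) as Hmj. rewrite tail_sq_S in Hmj.
  pose proof (tail_sq_nonneg (S j)). lra.
Qed.

End Tails.

Lemma in_l2_sub x z : in_l2 x -> in_l2 z -> in_l2 (fun i => x i - z i).
Proof.
  intros Hx Hz. apply ex_series_le_R with (fun i => 2 * x i ^ 2 + 2 * z i ^ 2).
  - intros i. pose proof (pow2_ge_0 (x i + z i)). split; [apply pow2_ge_0 | nra].
  - apply ex_series_plus_R; apply ex_series_scal_R; assumption.
Qed.

Lemma tail_sq_le_sub x z m : in_l2 x -> in_l2 z ->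
  tail_sq m x <= 2 * tail_sq m z + 2 * tail_sq m (fun i => x i - z i).
Proof.
  intros Hx Hz. pose proof (in_l2_sub x z Hx Hz) as Hd.
  pose proof (ex_series_tail_sq z Hz m) as Hzm.
  pose proof (ex_series_tail_sq _ Hd m) as Hdm.
  unfold tail_sq. rewrite <- !Series_scal_l, <- Series_plus
    by (apply ex_series_scal_R; assumption).
  apply Series_le.
  - intros i. pose proof (pow2_ge_0 (2 * z (m + i)%nat - x (m + i)%nat)).
    split; [apply pow2_ge_0 | nra].
  - apply ex_series_plus_R; apply ex_series_scal_R; assumption.
Qed.

Lemma tail2_lt_near x z m c : in_l2 x -> in_l2 z ->
  tail2 m z < c / 2 -> l2norm (fun i => x i - z i) <= c / 2 -> tail2 m x < c.
Proof.
  intros Hx Hz Hzm Hd.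
  set (d := fun i => x i - z i) in Hd.
  assert (Hdl : in_l2 d) by now apply in_l2_sub.
  change (sqrt (tail_sq m z) < c / 2) in Hzm.
  assert (Hc : 0 < c / 2) by (pose proof (sqrt_pos (tail_sq m z)); lra).
  apply sqrt_lt_iff in Hzm; [|apply tail_sq_nonneg; exact Hz | lra].
  assert (Hd0 : tail_sq 0 d <= (c / 2) ^ 2).
  { rewrite <- (pow2_sqrt _ (tail_sq_nonneg d Hdl 0)).
    apply pow_incr. split; [apply sqrt_pos | exact Hd]. }
  pose proof (tail_sq_antimon d Hdl 0 m (Nat.le_0_l m)) as Hdm.
  pose proof (tail_sq_le_sub x z m Hx Hz) as Hxz.
  change (sqrt (tail_sq m x) < c). fold d in Hxz.
  assert (Hc2 : 4 * (c / 2) ^ 2 = c ^ 2) by field.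
  apply sqrt_lt_iff; [apply tail_sq_nonneg; exact Hx | lra | lra].
Qed.

Lemma Ubasic_tail2 r e z : Ubasic r e z -> in_l2 z /\ tail2 (length r) z < Q2R e.
Proof. destruct r; intros [Hz Hr]; split; [exact Hz | exact Hr | exact Hz | apply Hr]. Qed.

Lemma Ubasic_intro q e z : in_l2 z ->
  head_inf_lt q z (Q2R e / sqrt (INR (length q))) -> tail2 (length q) z < Q2R e ->
  Ubasic q e z.
Proof.
  intros Hz Hhead Htail.
  destruct q; split; [exact Hz | exact Htail | exact Hz | split; assumption].
Qed.

Lemma l2closure_Ubasic_subset r eta delta x :
  0 <= Q2R eta -> Q2R eta < Q2R delta / 2 ->
  l2closure (Ubasic r eta) x -> Ubasic r delta x.
Proof.
  intros Heta0 Heta [Hx Hclose].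
  set (s := sqrt (INR (length r))).
  assert (Hs : 0 <= s) by apply sqrt_pos.
  set (e := Q2R delta / 2 / (s + 1)).
  assert (He : e * (s + 1) = Q2R delta / 2) by (unfold e; field; lra).
  assert (He0 : 0 < e) by (apply Rdiv_lt_0_compat; lra).
  destruct (Hclose e He0) as [z [Hz Hxz]].
  destruct (Ubasic_tail2 _ _ _ Hz) as [Hzl Hzt].
  apply Ubasic_intro; [exact Hx | | apply tail2_lt_near with z; auto; nra].
  intros i Hi. destruct r as [|a r]; [simpl in Hi; lia|].
  destruct Hz as [_ [Hzh _]]. specialize (Hzh i Hi). fold s in Hzh |- *.
  assert (Hs1 : 0 < s) by (apply sqrt_lt_R0, lt_0_INR; simpl; lia).
  pose proof (Rabs_le_tail2 _ (in_l2_sub x z Hx Hzl) 0 i (Nat.le_0_l i)) as Hxzi.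
  rewrite <- Rlt_div_r in Hzh by lra. apply Rlt_div_r; [lra|].
  replace (x i - Q2R (nth i (a :: r) 0%Q)) with ((z i - Q2R (nth i (a :: r) 0%Q)) + (x i - z i))
    by ring.
  pose proof (Rabs_triang (z i - Q2R (nth i (a :: r) 0%Q)) (x i - z i)).
  change (tail2 0 (fun i => x i - z i)) with (l2norm (fun i => x i - z i)) in Hxzi.
  assert (Rabs (x i - z i) * s <= e * s) by (apply Rmult_le_compat_r; lra).
  nra.
Qed.

Fixpoint wprod (w : nat -> nat) (i k : nat) : nat :=
  match k with
  | O => 1
  | S k' => w i * wprod w (S i) k'
  end.

Lemma wprod_add w i a b : wprod w i (a + b) = (wprod w i a * wprod w (i + a) b)%nat.
Proof.
  revert i. induction a as [|a IH]; intros i; simpl.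
  - now rewrite Nat.add_0_r, Nat.add_0_r.
  - rewrite IH, Nat.add_succ_r. simpl. ring.
Qed.

Lemma wprod_ext w w' i k :
  (forall j, (i <= j < i + k)%nat -> w j = w' j) -> wprod w i k = wprod w' i k.
Proof.
  revert i. induction k as [|k IH]; intros i Hw; simpl; [reflexivity|].
  rewrite (Hw i), IH; [reflexivity | intros; apply Hw; lia | lia].
Qed.

Lemma wprod_bounds w i k : weight12 w -> (1 <= wprod w i k <= 2 ^ k)%nat.
Proof.
  intros Hw. revert i. induction k as [|k IH]; intros i; simpl; [lia|].
  specialize (IH (S i)). destruct (Hw i) as [-> | ->]; lia.
Qed.

Lemma INR_wprod_bounds w i k : weight12 w -> 1 <= INR (wprod w i k) <= 2 ^ k.
Proof.
  intros Hw. destruct (wprod_bounds w i k Hw) as [H1 H2].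
  apply le_INR in H1, H2. rewrite pow_INR in H2. change (INR 1) with 1 in H1.
  replace (INR 2) with 2 in H2 by (simpl; ring). lra.
Qed.

Lemma wprod_shift w i K : weight12 w ->
  (forall j, (j < i)%nat -> w (K + j)%nat = w j) -> wprod w i K = wprod w 0 K.
Proof.
  intros Hw. induction i as [|i IH]; intros Hper; [reflexivity|].
  rewrite <- IH by (intros; apply Hper; lia).
  (* split off the first, resp. the last, factor of [wprod w i (K + 1)] *)
  pose proof (wprod_add w i 1 K) as E1. pose proof (wprod_add w i K 1) as E2.
  rewrite Nat.add_comm in E1. rewrite E1 in E2. simpl in E2.
  rewrite Nat.add_1_r, (Nat.add_comm i K), Hper in E2 by lia.
  destruct (Hw i) as [Hwi | Hwi]; rewrite Hwi in E2; lia.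
Qed.

Lemma Bwk_eq w k x i : Bwk w k x i = INR (wprod w i k) * x (i + k)%nat.
Proof.
  revert i. induction k as [|k IH]; intros i.
  - simpl. rewrite Nat.add_0_r. ring.
  - unfold Bwk in *. simpl. unfold Bw at 1. rewrite IH, mult_INR, Nat.add_succ_r. simpl. ring.
Qed.

Lemma Bwk_nice w m k x i : weight12 w -> nice w m k -> (i <= m)%nat ->
  Bwk w k x i = INR (wprod w 0 k) * x (i + k)%nat.
Proof.
  intros Hw Hnice Hi. rewrite Bwk_eq, (wprod_shift w i k Hw); [reflexivity|].
  intros j Hj. symmetry. apply Hnice. lia.
Qed.

Section Shift.

Variables (w : nat -> nat) (k : nat) (x : seqR).
Hypotheses (Hw : weight12 w) (Hx : in_l2 x).

Lemma Bwk_sq_le i : Bwk w k x i ^ 2 <= (2 ^ k) ^ 2 * x (i + k)%nat ^ 2.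
Proof.
  rewrite Bwk_eq, Rpow_mult_distr. destruct (INR_wprod_bounds w i k Hw).
  apply Rmult_le_compat_r; [apply pow2_ge_0 | apply pow_incr; lra].
Qed.

Lemma in_l2_Bwk : in_l2 (Bwk w k x).
Proof.
  apply ex_series_le_R with (fun i => (2 ^ k) ^ 2 * x (k + i)%nat ^ 2).
  - intros i. rewrite Nat.add_comm. split; [apply pow2_ge_0 | apply Bwk_sq_le].
  - apply ex_series_scal_R, ex_series_tail_sq, Hx.
Qed.

Lemma tail2_Bwk_le m : tail2 m (Bwk w k x) <= 2 ^ k * tail2 (m + k) x.
Proof.
  unfold tail2. rewrite <- (sqrt_pow2 (2 ^ k)) at 1 by (apply pow_le; lra).
  rewrite <- sqrt_mult_alt by apply pow2_ge_0. apply sqrt_le_1_alt.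
  rewrite <- Series_scal_l. apply Series_le.
  - intros i. replace (m + k + i)%nat with (m + i + k)%nat by lia.
    split; [apply pow2_ge_0 | apply Bwk_sq_le].
  - apply ex_series_scal_R, ex_series_tail_sq, Hx.
Qed.

Lemma Rabs_Bwk_le i : Rabs (Bwk w k x i) <= 2 ^ k * l2norm x.
Proof.
  rewrite Bwk_eq, Rabs_mult, (Rabs_pos_eq _ (pos_INR _)).
  destruct (INR_wprod_bounds w i k Hw).
  apply Rmult_le_compat; [apply pos_INR | apply Rabs_pos | lra |].
  apply (Rabs_le_tail2 x Hx 0), Nat.le_0_l.
Qed.

End Shift.

Definition word12 (u : list nat) : Prop := List.Forall (fun a => a = 1%nat \/ a = 2%nat) u.

Lemma word12_app u v : word12 u -> word12 v -> word12 (u ++ v).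
Proof. intros Hu Hv. apply List.Forall_app. split; assumption. Qed.

Lemma word12_map w s : weight12 w -> word12 (map w s).
Proof. intros Hw. apply List.Forall_map, List.Forall_forall. intros j _. apply Hw. Qed.

Lemma weight12_alpha_plus u : word12 u -> weight12 (alpha_plus u).
Proof.
  intros Hu j. unfold alpha_plus. destruct (Nat.lt_ge_cases j (length u)) as [Hj | Hj].
  - unfold word12 in Hu. rewrite List.Forall_forall in Hu. apply Hu, nth_In, Hj.
  - rewrite nth_overflow by exact Hj. now right.
Qed.

Lemma Q2R_nat_frac a b : (b <> 0)%nat -> Q2R (Z.of_nat a # Pos.of_nat b) = INR a / INR b.
Proof.
  intros Hb. unfold Q2R. simpl.
  rewrite <- (positive_nat_Z (Pos.of_nat b)), Nat2Pos.id by exact Hb.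
  now rewrite <- !INR_IZR_INZ.
Qed.

Lemma Q2R_int z : Q2R (z # 1) = IZR z.
Proof. unfold Q2R. simpl. field. Qed.

Lemma one_le_sqrt_INR n : (1 <= n)%nat -> 1 <= sqrt (INR n).
Proof. intros Hn. rewrite <- sqrt_1. apply sqrt_le_1_alt, (le_INR 1), Hn. Qed.

Lemma cond_lt_extension alpha r delta t :
  is_condition alpha r delta -> word12 t ->
  exists eta, is_condition (alpha ++ t) r eta /\ cond_lt (alpha ++ t) r eta alpha r delta.
Proof.
  intros [Halpha [Hr [Hd0 [Hd1 _]]]] Ht.
  set (N := length (alpha ++ t)).
  set (eta := (delta * (1 # Pos.of_nat (4 * 2 ^ N)))%Q).
  assert (Heta : Q2R eta = Q2R delta / (4 * 2 ^ N)).
  { unfold eta. rewrite Q2R_mult. change 1%Z with (Z.of_nat 1).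
    rewrite Q2R_nat_frac by (pose proof (Nat.pow_nonzero 2 N); lia).
    rewrite mult_INR, pow_INR. replace (INR 4) with 4 by (simpl; ring).
    replace (INR 2) with 2 by (simpl; ring). simpl (INR 1). field. apply pow_nonzero. lra. }
  apply Qlt_Rlt in Hd0, Hd1. rewrite RMicromega.Q2R_0 in Hd0. rewrite RMicromega.Q2R_1 in Hd1.
  assert (HN : 1 <= 2 ^ N) by (apply pow_R1_Rle; lra).
  assert (Heta0 : 0 < Q2R eta) by (rewrite Heta; apply Rdiv_lt_0_compat; lra).
  assert (HetaN : Q2R eta * 2 ^ N < 1) by (rewrite Heta; field_simplify; lra).
  exists eta. split; [split; [|split; [|split; [|split]]] | split; [|split]].
  - apply word12_app; assumption.
  - unfold N. rewrite length_app. lia.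
  - apply Rlt_Qlt. rewrite RMicromega.Q2R_0. exact Heta0.
  - apply Rlt_Qlt. rewrite RMicromega.Q2R_1. nra.
  - apply (Rmult_lt_reg_r (2 ^ N)); [lra|]. rewrite Rinv_l; lra.
  - now exists t.
  - intros x. apply l2closure_Ubasic_subset; [lra|]. rewrite Heta.
    unfold Rdiv. apply Rmult_lt_compat_l; [lra|]. apply Rinv_lt_contravar; lra.
  - intros k [Hk1 Hk2] z Hz. fold N in Hk2.
    destruct (Ubasic_tail2 _ _ _ Hz) as [Hzl Hzt].
    assert (Hw : weight12 (alpha_plus (alpha ++ t)))
      by (apply weight12_alpha_plus, word12_app; assumption).
    split; [apply in_l2_Bwk; assumption|].
    pose proof (tail2_Bwk_le _ k z Hw Hzl 0) as Hnorm.
    pose proof (tail2_antimon z Hzl (length r) k ltac:(lia)) as Hzk.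
    assert (Hk : 2 ^ k <= 2 ^ N) by (apply Rle_pow; lra || lia).
    assert (2 ^ k * tail2 k z <= 2 ^ N * Q2R eta)
      by (apply Rmult_le_compat; [apply pow_le; lra | apply sqrt_pos | lra | lra]).
    change (l2norm (Bwk (alpha_plus (alpha ++ t)) k z))
      with (tail2 0 (Bwk (alpha_plus (alpha ++ t)) k z)).
    simpl (0 + k)%nat in Hnorm. lra.
Qed.

Definition extend_word (alpha : list nat) (w : nat -> nat) (K : nat) : list nat :=
  alpha ++ map w (seq (length alpha) (K - length alpha)).

Lemma length_extend_word alpha w K :
  (length alpha <= K)%nat -> length (extend_word alpha w K) = K.
Proof. intros HK. unfold extend_word. rewrite length_app, length_map, length_seq. lia. Qed.

Lemma word12_extend_word alpha w K :
  word12 alpha -> weight12 w -> word12 (extend_word alpha w K).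
Proof. intros Halpha Hw. apply word12_app, word12_map; assumption. Qed.

Lemma word12_firstn u n : word12 u -> word12 (firstn n u).
Proof. intros Hu. rewrite <- (firstn_skipn n u) in Hu. now apply List.Forall_app in Hu. Qed.

Lemma word12_repeat_prefix u n : word12 u -> word12 (u ++ firstn n u).
Proof. intros Hu. apply word12_app, word12_firstn; exact Hu. Qed.

Lemma alpha_plus_app_l u v j : (j < length u)%nat -> alpha_plus (u ++ v) j = alpha_plus u j.
Proof. intros Hj. unfold alpha_plus. now rewrite app_nth1. Qed.

Lemma alpha_plus_extend_word_ge alpha w K j : (length alpha <= j < K)%nat ->
  alpha_plus (extend_word alpha w K) j = w j.
Proof.
  intros Hj. unfold alpha_plus, extend_word. rewrite app_nth2 by lia.
  rewrite (nth_indep _ _ (w 0%nat)) by (rewrite length_map, length_seq; lia).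
  rewrite map_nth, seq_nth by lia. f_equal. lia.
Qed.

Lemma nice_repeat_prefix u n :
  (n <= length u)%nat -> nice (alpha_plus (u ++ firstn n u)) n (length u).
Proof.
  intros Hn i Hi. unfold alpha_plus.
  rewrite app_nth1, app_nth2_plus, nth_firstn by lia.
  now replace (i <? n)%nat with true by (symmetry; apply Nat.ltb_lt, Hi).
Qed.

Lemma wprod_extend_word alpha w k : (length alpha <= k)%nat ->
  (wprod (alpha_plus (extend_word alpha w (S k))) 0 (S k) * wprod w 0 (length alpha)
   = wprod (alpha_plus alpha) 0 (length alpha) * w k * wprod w 0 k)%nat.
Proof.
  intros Hk. set (L := length alpha).
  assert (Hsplit : forall v, wprod v 0 (S k) = (wprod v 0 L * wprod v L (k - L) * v k)%nat).
  { intros v. replace (S k) with (L + (k - L) + 1)%nat by lia.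
    rewrite !wprod_add. simpl. replace (L + (k - L))%nat with k by lia. ring. }
  assert (Hk' : wprod w 0 k = (wprod w 0 L * wprod w L (k - L))%nat).
  { rewrite <- wprod_add. f_equal. lia. }
  rewrite Hsplit, Hk', alpha_plus_extend_word_ge by lia.
  rewrite (wprod_ext _ (alpha_plus alpha) 0 L), (wprod_ext _ w L (k - L)); [ring | |].
  - intros j Hj. apply alpha_plus_extend_word_ge. lia.
  - intros j Hj. unfold extend_word. apply alpha_plus_app_l. simpl in Hj. lia.
Qed.

Lemma Bwk_index_ge w k y N qs e m : weight12 w -> in_l2 y -> 0 < Q2R e ->
  2 ^ m * l2norm y + Q2R e <= Q2R N -> Ubasic (N :: qs) e (Bwk w k y) -> (m <= k)%nat.
Proof.
  intros Hw Hy He HN [_ [Hhead _]].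
  destruct (Nat.le_gt_cases m k) as [Hk | Hk]; [exact Hk | exfalso].
  specialize (Hhead 0%nat ltac:(simpl; lia)). simpl nth in Hhead.
  apply Rabs_def2 in Hhead as [_ Hhead].
  assert (Hs : Q2R e / sqrt (INR (length (N :: qs))) <= Q2R e).
  { pose proof (one_le_sqrt_INR (length (N :: qs)) ltac:(simpl; lia)).
    apply Rle_div_l; [lra | nra]. }
  pose proof (Rabs_Bwk_le w k y Hw Hy 0%nat). pose proof (Rle_abs (Bwk w k y 0%nat)).
  assert (2 ^ k * l2norm y <= 2 ^ m * l2norm y)
    by (apply Rmult_le_compat_r; [apply sqrt_pos | apply Rle_pow; lra || lia]).
  lra.
Qed.

Lemma Rabs_scale_lt c u v e : 0 < c -> Rabs (u - v / c) < e -> Rabs (c * u - v) < c * e.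
Proof.
  intros Hc Huv. replace (c * u - v) with (c * (u - v / c)) by (field; lra).
  rewrite Rabs_mult, Rabs_pos_eq by lra. apply Rmult_lt_compat_l; assumption.
Qed.

Section Hitting.

Variables (alpha : list nat) (w : nat -> nat) (y : seqR) (q : list Q) (eps : Q).
Hypotheses (Halpha : word12 alpha) (Hw : weight12 w) (Hy : in_l2 y) (Heps : 0 < Q2R eps).

Let L := length alpha.
Let n := length q.
Let A := (wprod (alpha_plus alpha) 0 L * w 0%nat)%nat.
Let B := wprod w 0 L.
Let c := INR A / INR B.
Let eps' := (eps * (1 # Pos.of_nat (2 * A)))%Q.
Let target := (up (2 ^ (L + n) * l2norm y + Q2R eps') # 1)%Q
              :: map (fun a => a * (Z.of_nat B # Pos.of_nat A))%Q q.

Lemma A_pos : (1 <= A)%nat.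
Proof.
  unfold A. pose proof (wprod_bounds _ 0 L (weight12_alpha_plus _ Halpha)).
  destruct (Hw 0%nat); lia.
Qed.

Lemma B_pos : (1 <= B)%nat.
Proof. apply (wprod_bounds w 0 L Hw). Qed.

Lemma Q2R_eps' : Q2R eps' = Q2R eps / (2 * INR A).
Proof.
  pose proof A_pos. unfold eps'. rewrite Q2R_mult. change 1%Z with (Z.of_nat 1).
  rewrite Q2R_nat_frac by lia. rewrite mult_INR. simpl (INR 1).
  replace (INR 2) with 2 by (simpl; ring). field. apply not_0_INR. lia.
Qed.

Lemma eps'_bounds : 0 < Q2R eps' /\ 2 * Q2R eps' <= Q2R eps /\ c * Q2R eps' <= Q2R eps.
Proof.
  pose proof (le_INR 1 _ A_pos) as HA. pose proof (le_INR 1 _ B_pos) as HB. simpl in HA, HB.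
  rewrite Q2R_eps'. unfold c. split; [|split].
  - apply Rdiv_lt_0_compat; lra.
  - replace (2 * (Q2R eps / (2 * INR A))) with (Q2R eps / INR A) by (field; lra).
    apply Rle_div_l; [lra | nra].
  - replace (INR A / INR B * (Q2R eps / (2 * INR A))) with (Q2R eps / (2 * INR B))
      by (field; lra).
    apply Rle_div_l; [lra | nra].
Qed.

Lemma length_target : length target = S n.
Proof. simpl. now rewrite length_map. Qed.

Lemma Q2R_target i : (i < n)%nat -> Q2R (nth (S i) target 0%Q) = Q2R (nth i q 0%Q) / c.
Proof.
  intros Hi. pose proof A_pos. pose proof B_pos. unfold target. simpl nth.
  rewrite (nth_indep _ _ (0 * (Z.of_nat B # Pos.of_nat A))%Q) by (rewrite length_map; exact Hi).
  rewrite (map_nth (fun a => (a * (Z.of_nat B # Pos.of_nat A))%Q)), Q2R_mult, Q2R_nat_frac by lia.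
  unfold c. field. split; apply not_0_INR; lia.
Qed.

Section Transfer.

Variable k : nat.
Hypothesis Hk : maps_nicely w k y target eps'.

Let period := extend_word alpha w (S k).
Let beta_plus := alpha_plus (period ++ firstn n period).

Lemma hitting_time_ge : (L + n <= k)%nat.
Proof.
  destruct Hk as [HU _]. destruct eps'_bounds as [He _].
  unfold target in HU. refine (Bwk_index_ge w k y _ _ eps' (L + n) Hw Hy He _ HU).
  rewrite Q2R_int.
  pose proof (archimed (2 ^ (L + n) * l2norm y + Q2R eps')). lra.
Qed.

Lemma length_period : length period = S k.
Proof. pose proof hitting_time_ge. apply length_extend_word. fold L. lia. Qed.

Lemma weight12_beta_plus : weight12 beta_plus.
Proof. apply weight12_alpha_plus, word12_repeat_prefix, word12_extend_word; assumption. Qed.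

Lemma nice_beta_plus : nice beta_plus n (S k).
Proof.
  pose proof hitting_time_ge. rewrite <- length_period.
  apply nice_repeat_prefix. rewrite length_period. lia.
Qed.

Lemma Bwk_beta_plus_eq i : (i < n)%nat -> Bwk beta_plus (S k) y i = c * Bwk w k y (S i).
Proof.
  intros Hi. destruct Hk as [_ [Hnice _]]. rewrite length_target in Hnice.
  rewrite (Bwk_nice beta_plus n (S k) y i weight12_beta_plus nice_beta_plus),
    (Bwk_nice w (S n) k y (S i) Hw Hnice) by lia.
  assert (Hb : wprod beta_plus 0 (S k) = wprod (alpha_plus period) 0 (S k)).
  { apply wprod_ext. intros j Hj. apply alpha_plus_app_l. rewrite length_period. lia. }
  assert (Hwk : w k = w 0%nat) by (rewrite (Hnice 0%nat), Nat.add_0_r by lia; reflexivity).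
  pose proof (wprod_extend_word alpha w k ltac:(pose proof hitting_time_ge; fold L; lia)) as E.
  rewrite Hwk in E. fold L period B A in E. rewrite <- Hb in E.
  apply (f_equal INR) in E. rewrite 2!mult_INR in E.
  pose proof (le_INR 1 _ B_pos) as HBn. simpl in HBn.
  assert (Hc : INR (wprod beta_plus 0 (S k)) = c * INR (wprod w 0 k))
    by (unfold c; apply (Rmult_eq_reg_r (INR B)); [rewrite E; field |]; lra).
  rewrite Hc. replace (i + S k)%nat with (S i + k)%nat by lia. ring.
Qed.

Lemma maps_nicely_beta_plus : maps_nicely beta_plus (S k) y q eps.
Proof.
  destruct Hk as [HU [_ Htail]]. rewrite length_target in Htail.
  destruct eps'_bounds as [He0 [He2 Hce]].
  assert (Hhead : head_inf_lt target (Bwk w k y) (Q2R eps' / sqrt (INR (length target))))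
    by (unfold target in HU |- *; apply HU).
  assert (H2k : 0 < 2 ^ k) by (apply pow_lt; lra).
  assert (Htail' : tail2 (S k + n) y < Q2R eps * / 2 ^ S k).
  { replace (S k + n)%nat with (k + S n)%nat by lia.
    eapply Rlt_le_trans; [exact Htail|].
    replace (Q2R eps * / 2 ^ S k) with (Q2R eps / 2 * / 2 ^ k) by (simpl pow; field; lra).
    apply Rmult_le_compat_r; [left; apply Rinv_0_lt_compat, H2k | lra]. }
  split; [|split; [exact nice_beta_plus | exact Htail']].
  apply Ubasic_intro; [apply in_l2_Bwk; [exact weight12_beta_plus | exact Hy] | |].
  - intros i Hi. rewrite Bwk_beta_plus_eq by exact Hi.
    specialize (Hhead (S i) ltac:(rewrite length_target; lia)).
    rewrite Q2R_target, length_target in Hhead by exact Hi. fold n.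
    assert (Hc : 0 < c)
      by (apply Rdiv_lt_0_compat; apply lt_0_INR; [apply A_pos | apply B_pos]).
    eapply Rlt_le_trans; [apply Rabs_scale_lt; eassumption|].
    assert (Hn : 0 < sqrt (INR n)) by (apply sqrt_lt_R0, lt_0_INR; lia).
    pose proof (sqrt_le_1_alt _ _ (le_INR _ _ (Nat.le_succ_diag_r n))).
    unfold Rdiv. rewrite <- Rmult_assoc.
    apply Rmult_le_compat; [nra | left; apply Rinv_0_lt_compat; lra | exact Hce |].
    apply Rinv_le_contravar; lra.
  - pose proof (tail2_Bwk_le beta_plus (S k) y weight12_beta_plus Hy n) as Hb.
    rewrite Nat.add_comm in Hb.
    assert (H2K : 0 < 2 ^ S k) by (apply pow_lt; lra).
    pose proof (proj2 (Rlt_div_r _ _ _ H2K) Htail'). fold n. lra.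
Qed.

End Transfer.

Lemma nicely_hypercyclic_extension :
  (forall qs e, (0 < e)%Q -> exists k, maps_nicely w k y qs e) ->
  exists t k, word12 t /\ (k <= length (alpha ++ t))%nat /\
    maps_nicely (alpha_plus (alpha ++ t)) k y q eps.
Proof.
  intros Hhit. destruct eps'_bounds as [He0 _].
  destruct (Hhit target eps') as [k Hk].
  { apply Rlt_Qlt. rewrite RMicromega.Q2R_0. exact He0. }
  set (period := extend_word alpha w (S k)).
  exists (map w (seq L (S k - L)) ++ firstn n period), (S k).
  rewrite app_assoc. change (alpha ++ map w (seq L (S k - L))) with period.
  split; [|split].
  - apply word12_app, word12_firstn, word12_extend_word; [apply word12_map | |]; assumption.
  - unfold period. rewrite length_app, (length_period k Hk). lia.
  - exact (maps_nicely_beta_plus k Hk).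
Qed.

End Hitting.

Theorem lemma11 (alpha : list nat) (r : list Q) (delta : Q)
  (y : nat -> R) (q : list Q) (eps : Q) :
  is_condition alpha r delta ->
  nicely_hypercyclic y ->
  (0 < eps)%Q ->
  exists (beta : list nat) (s : list Q) (eta : Q),
    is_condition beta s eta /\
    cond_lt beta s eta alpha r delta /\
    exists k, (k <= length beta)%nat /\ maps_nicely (alpha_plus beta) k y q eps.
Proof.
  intros Hcond [Hy [w [Hw Hhit]]] Heps.
  apply Qlt_Rlt in Heps. rewrite RMicromega.Q2R_0 in Heps.
  destruct (nicely_hypercyclic_extension alpha w y q eps (proj1 Hcond) Hw Hy Heps Hhit)
    as [t [k [Ht [Hk Hnice]]]].
  destruct (cond_lt_extension alpha r delta t Hcond Ht) as [eta [Hcond' Hlt]].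
  exists (alpha ++ t), r, eta. split; [exact Hcond'|]. split; [exact Hlt|].
  exists k. split; assumption.
Qed.
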